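(* Let $G$ be a finite group and $N\trianglelefteq G$ a normal subgroup. If $N$ and $G/N$ are mixable, then $G$ is mixable, and $\mathrm{mixlen}(G)\le\mathrm{mixlen}(N)+\mathrm{mixlen}(G/N)$.
   Context: For a finite group $G$, a random subproduct is a random element $g_1^{\epsilon_1}\cdots g_k^{\epsilon_k}$ with $g_1,\dots,g_k\in G$ fixed and $\epsilon_1,\dots,\epsilon_k$ independent Bernoulli random variables, $\epsilon_i\sim\mathrm{Ber}(p_i)$, $p_i\in[0,1]$; $k$ is its length. $G$ is mixable if some random subproduct is exactly uniform on $G$, and $\mathrm{mixlen}(G)$ is the minimal length of such. *)

From HB Require Import structures.
From mathcomp Require Import all_boot all_order all_fingroup all_algebra.
From mathcomp Require Import reals.
From Stdlib Require Import ClassicalEpsilon ClassicalDescription.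
Set Implicit Arguments. Unset Strict Implicit. Unset Printing Implicit Defensive.
Import GRing.Theory Num.Theory.

Local Open Scope ring_scope.

(* The probability that the random subproduct g_0^{e_0} ... g_{k-1}^{e_{k-1}}
   (e_i ~ Ber(p_i) independent) equals x. *)
Definition subprod_prob (R : realType) (gT : finGroupType) (k : nat)
  (g : 'I_k -> gT) (p : 'I_k -> R) (x : gT) : R :=
  \sum_(e : {ffun 'I_k -> bool})
     (\prod_(i < k) (if e i then p i else 1 - p i)) *
     ((\prod_(i < k) (if e i then g i else 1%g))%g == x)%:R.

Definition mixable_len (R : realType) (gT : finGroupType) (H : {group gT})
  (k : nat) : Prop :=
  exists (g : 'I_k -> gT) (p : 'I_k -> R),
    (forall i, g i \in H) /\ (forall i, 0 <= p i <= 1) /\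
    (forall x, x \in H -> subprod_prob g p x = #|H|%:R^-1).

Definition mixable (R : realType) (gT : finGroupType) (H : {group gT}) : Prop :=
  exists k, mixable_len R H k.

(* Minimal length of a uniform random subproduct (0 by convention if H is
   not mixable). *)
Definition mixlen (R : realType) (gT : finGroupType) (H : {group gT}) : nat :=
  match excluded_middle_informative
          (exists k, mixable_len R H k /\ forall j, mixable_len R H j -> (k <= j)%N)
  with
  | left h => proj1_sig (constructive_indefinite_description _ h)
  | right _ => 0%N
  end.

From HB Require Import structures.
From mathcomp Require Import all_boot all_order all_fingroup all_algebra.
From mathcomp Require Import reals boolp.
From Stdlib Require Import ClassicalEpsilon ClassicalDescription.
Set Implicit Arguments. Unset Strict Implicit. Unset Printing Implicit Defensive.
Import GRing.Theory Num.Theory.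

(* Run a uniform random subproduct of G / N with its factors replaced by
   coset representatives in G, then an independent uniform random subproduct
   of N.  The first part lands in each coset of N with probability
   1 / #|G / N|; whatever element A it reaches, the second part multiplies it
   by a uniform element of N, i.e. spreads the mass uniformly over A N.  The
   concatenation is therefore uniform on G, and its length is the sum of the
   two lengths. *)

Local Open Scope ring_scope.

Definition cat_fun (T : Type) m l (f1 : 'I_m -> T) (f2 : 'I_l -> T)
    (i : 'I_(m + l)) : T :=
  match split i with inl j => f1 j | inr j => f2 j end.

Definition cat_ffun (T : finType) m l (e1 : {ffun 'I_m -> T})
    (e2 : {ffun 'I_l -> T}) : {ffun 'I_(m + l) -> T} :=
  [ffun i => cat_fun e1 e2 i].

Section CatFun.

Variables (T : Type) (m l : nat) (f1 : 'I_m -> T) (f2 : 'I_l -> T).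

Lemma cat_fun_lshift j : cat_fun f1 f2 (lshift l j) = f1 j.
Proof. by rewrite /cat_fun -[lshift l j]/(unsplit (inl _ j)) unsplitK. Qed.

Lemma cat_fun_rshift j : cat_fun f1 f2 (rshift m j) = f2 j.
Proof. by rewrite /cat_fun -[rshift m j]/(unsplit (inr _ j)) unsplitK. Qed.

Lemma cat_fun_all (P : T -> Prop) :
  (forall j, P (f1 j)) -> (forall j, P (f2 j)) -> forall i, P (cat_fun f1 f2 i).
Proof. by move=> P1 P2 i; rewrite /cat_fun; case: split. Qed.

End CatFun.

Lemma big_cat_ffun (S : Type) (idx : S) (op : Monoid.com_law idx)
    (T : finType) m l (F : {ffun 'I_(m + l) -> T} -> S) :
  \big[op/idx]_(e : {ffun 'I_(m + l) -> T}) F e =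
  \big[op/idx]_(e1 : {ffun 'I_m -> T}) \big[op/idx]_(e2 : {ffun 'I_l -> T})
     F (cat_ffun e1 e2).
Proof.
rewrite pair_big /= (reindex (fun e => cat_ffun e.1 e.2)) //.
exists (fun e : {ffun 'I_(m + l) -> T} =>
  ([ffun j => e (lshift l j)], [ffun j => e (rshift m j)])).
  move=> [e1 e2] _; congr pair; apply/ffunP => j.
    by rewrite !ffunE cat_fun_lshift.
  by rewrite !ffunE cat_fun_rshift.
move=> e _; apply/ffunP => i; rewrite ffunE /cat_fun /=.
by move: (splitK i); case: (split i) => j /= <-; rewrite ffunE.
Qed.

Section Subproducts.

Variables (R : realType) (gT : finGroupType).

Definition subprod k (g : 'I_k -> gT) (e : {ffun 'I_k -> bool}) : gT :=
  (\prod_(i < k) (if e i then g i else 1))%g.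

Definition bernoulli_weight k (p : 'I_k -> R) (e : {ffun 'I_k -> bool}) : R :=
  \prod_(i < k) (if e i then p i else 1 - p i).

Lemma subprod_probE k (g : 'I_k -> gT) (p : 'I_k -> R) x :
  subprod_prob g p x =
  \sum_(e : {ffun 'I_k -> bool}) bernoulli_weight p e * (subprod g e == x)%:R.
Proof. by []. Qed.

Lemma subprod_cat m l (g1 : 'I_m -> gT) (g2 : 'I_l -> gT) e1 e2 :
  subprod (cat_fun g1 g2) (cat_ffun e1 e2) = (subprod g1 e1 * subprod g2 e2)%g.
Proof.
rewrite /subprod big_split_ord; congr (_ * _)%g; apply: eq_bigr => i _.
  by rewrite ffunE !cat_fun_lshift.
by rewrite ffunE !cat_fun_rshift.
Qed.

Lemma bernoulli_weight_cat m l (p1 : 'I_m -> R) (p2 : 'I_l -> R) e1 e2 :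
  bernoulli_weight (cat_fun p1 p2) (cat_ffun e1 e2) =
  bernoulli_weight p1 e1 * bernoulli_weight p2 e2.
Proof.
rewrite /bernoulli_weight big_split_ord; congr (_ * _); apply: eq_bigr => i _.
  by rewrite ffunE !cat_fun_lshift.
by rewrite ffunE !cat_fun_rshift.
Qed.

Lemma subprod_prob_cat m l (g1 : 'I_m -> gT) (g2 : 'I_l -> gT)
    (p1 : 'I_m -> R) (p2 : 'I_l -> R) x :
  subprod_prob (cat_fun g1 g2) (cat_fun p1 p2) x =
  \sum_(e1 : {ffun 'I_m -> bool})
     bernoulli_weight p1 e1 * subprod_prob g2 p2 ((subprod g1 e1)^-1 * x)%g.
Proof.
rewrite subprod_probE big_cat_ffun; apply: eq_bigr => e1 _.
rewrite subprod_probE big_distrr; apply: eq_bigr => e2 _.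
rewrite subprod_cat bernoulli_weight_cat -mulrA; congr (_ * (_ * _%:R)).
by rewrite -(inj_eq (mulgI (subprod g1 e1)^-1%g)) mulKg.
Qed.

Lemma subprod_prob_out (H : {group gT}) k (g : 'I_k -> gT) (p : 'I_k -> R) y :
  (forall i, g i \in H) -> y \notin H -> subprod_prob g p y = 0.
Proof.
move=> gH yH; rewrite subprod_probE big1 // => e _.
case: eqP => [gey | _]; last by rewrite mulr0.
by case/negP: yH; rewrite -gey; apply: group_prod => i _; case: (e i).
Qed.

Lemma uniform_subprod_probE (H : {group gT}) k (g : 'I_k -> gT) (p : 'I_k -> R) :
  (forall i, g i \in H) ->
  (forall x, x \in H -> subprod_prob g p x = #|H|%:R^-1) ->
  forall y, subprod_prob g p y = (y \in H)%:R / #|H|%:R.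
Proof.
move=> gH unifH y; case: (boolP (y \in H)) => yH; first by rewrite mul1r unifH.
by rewrite mul0r (subprod_prob_out _ gH).
Qed.

End Subproducts.

Lemma mem_mulVg_coset (gT : finGroupType) (H : {group gT}) x y :
  x \in 'N(H)%g -> y \in 'N(H)%g ->
  ((x^-1 * y)%g \in H) = (coset H x == coset H y).
Proof.
move=> xN yN; have xyN : (x^-1 * y)%g \in 'N(H)%g by rewrite groupM ?groupV.
have -> : (coset H x == coset H y) = (coset H (x^-1 * y) == 1)%g.
  by rewrite morphM ?groupV // morphV // eq_mulVg1.
by apply/idP/eqP => [/coset_id | /(coset_idr xyN)].
Qed.

Section NormalExtension.

Variables (R : realType) (gT : finGroupType) (G N : {group gT}).
Hypothesis nNG : (N <| G)%g.

Lemma repr_coset_in_quotient (xbar : coset_of N) :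
  xbar \in (G / N)%g -> repr xbar \in G.
Proof.
move=> xbarG; rewrite -(quotientGK nNG).
apply/morphpreP; rewrite repr_coset_norm.
by move: xbarG; rewrite -{1}(coset_reprK xbar).
Qed.

Lemma coset_subprod_repr k (h : 'I_k -> coset_of N) e :
  coset N (subprod (fun i => repr (h i)) e) = subprod h e.
Proof.
rewrite /subprod morph_prod; last first.
  by move=> i _; case: (e i); rewrite ?repr_coset_norm.
by apply: eq_bigr => i _; case: (e i); [exact: coset_reprK | exact: morph1].
Qed.

Lemma mixable_len_normal_ext a b :
  mixable_len R N a -> mixable_len R (G / N)%G b -> mixable_len R G (b + a).
Proof.
move=> [gN [pN [gNN [pN01 unifN]]]] [h [q [hGN [q01 unifGN]]]].
have nGN := normal_norm nNG; have sNG := normal_sub nNG.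
pose gG i := repr (h i).
have gGG i : gG i \in G by exact: repr_coset_in_quotient.
exists (cat_fun gG gN), (cat_fun q pN); split; [|split].
- by apply: (cat_fun_all (P := fun y => y \in G)) => // j; apply: (subsetP sNG).
- exact: (cat_fun_all (P := fun r => 0 <= r <= 1)).
move=> x xG; rewrite subprod_prob_cat.
have subprodG e : subprod gG e \in G.
  by apply: group_prod => i _; case: (e i).
transitivity (subprod_prob h q (coset N x) / #|N|%:R).
  rewrite subprod_probE big_distrl; apply: eq_bigr => e _ /=.
  rewrite (uniform_subprod_probE gNN unifN).
  by rewrite mem_mulVg_coset ?(subsetP nGN) // coset_subprod_repr mulrA.
rewrite unifGN ?mem_quotient // -invfM -natrM card_quotient //.
by rewrite mulnC Lagrange.
Qed.

End NormalExtension.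

Section MinimalLength.

Variables (R : realType) (gT : finGroupType) (H : {group gT}).

Lemma mixlen_spec : mixable R H ->
  mixable_len R H (mixlen R H) /\ forall j, mixable_len R H j -> (mixlen R H <= j)%N.
Proof.
move=> [k0 Hk0]; rewrite /mixlen; case: excluded_middle_informative => [ex | []].
  by case: (constructive_indefinite_description _ ex).
have exP : exists k, `[< mixable_len R H k >] by exists k0; apply/asboolP.
case: (ex_minnP exP) => k /asboolP Hk minP.
by exists k; split=> // j /asboolP; apply: minP.
Qed.

Lemma mixlen_min j : mixable_len R H j -> (mixlen R H <= j)%N.
Proof. by move=> Hj; apply: (mixlen_spec _).2; first exists j. Qed.

End MinimalLength.

Theorem mainTheorem11 (R : realType) (gT : finGroupType) (G N : {group gT}) :
  (N <| G)%g ->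
  mixable R N -> mixable R (G / N)%G ->
  mixable R G /\ (mixlen R G <= mixlen R N + mixlen R (G / N)%G)%N.
Proof.
move=> nNG mN mGN.
have mixG := mixable_len_normal_ext nNG (mixlen_spec mN).1 (mixlen_spec mGN).1.
split; first by exists (mixlen R (G / N)%G + mixlen R N)%N.
by rewrite addnC; apply: mixlen_min.
Qed.
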